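(* Let $k\ge 3$ be an integer and let $G\in\mathcal{F}_v(k-1,k-1;k)$ with $|V(G)|=F_v(k-1,k-1;k)$. Let $f(G)$ be the largest number of vertices of a $K_{k-1}$-free induced subgraph of $G$. Then $$F_v(J_k,J_k;k)\le 3F_v(k-1,k-1;k)-f(G).$$
   Context: All graphs are finite and simple. $J_n$ denotes $K_n$ with one edge removed. An integer $a$ used in place of a graph denotes $K_a$. ''A graph $F$ contains $H$'' means $F$ has a (not necessarily induced) subgraph isomorphic to $H$. $G\rightarrow(H_1,H_2)^v$ means: for every partition $V(G)=X_1\cup X_2$ there is $i$ such that the subgraph induced by $X_i$ contains $H_i$. $\mathcal{F}_v(H_1,H_2;k)$ is the set of $K_k$-free graphs $G$ with $G\rightarrow(H_1,H_2)^v$, and $F_v(H_1,H_2;k)$ is the minimum number of vertices of a graph in this set. *)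

From mathcomp Require Import all_boot.
Set Implicit Arguments. Unset Strict Implicit. Unset Printing Implicit Defensive.

Definition simple_graph (V : finType) (e : rel V) : Prop :=
  irreflexive e /\ symmetric e.

Definition Kg (n : nat) : rel 'I_n := fun i j => i != j.

(* J_n : K_n with the edge {0,1} removed. *)
Definition Jg (n : nat) : rel 'I_n :=
  fun i j => (i != j) && ~~ ((val i <= 1) && (val j <= 1)).

(* The subgraph of (V,e) induced by X contains (W,h) (not necessarily induced):
   an injective map W -> X sending edges to edges. *)
Definition contains_in (W V : finType) (h : rel W) (e : rel V) (X : {set V}) : bool :=
  [exists f : {ffun W -> V},
     [&& injectiveb f, [forall w, f w \in X] &
         [forall a, forall b, h a b ==> e (f a) (f b)]]].

Definition Kfree (V : finType) (e : rel V) (k : nat) : Prop :=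
  ~~ contains_in (@Kg k) e setT.

Definition varrows (V W1 W2 : finType) (e : rel V) (h1 : rel W1) (h2 : rel W2) : Prop :=
  forall X : {set V}, contains_in h1 e X \/ contains_in h2 e (~: X).

Definition inFv (V W1 W2 : finType) (e : rel V) (h1 : rel W1) (h2 : rel W2) (k : nat) : Prop :=
  simple_graph e /\ Kfree e k /\ varrows e h1 h2.

Definition fmax (V : finType) (e : rel V) (a : nat) : nat :=
  \max_(S : {set V} | ~~ contains_in (@Kg a) e S) #|S|.
Arguments Kg n : clear implicits.
Arguments Jg n : clear implicits.

From mathcomp Require Import all_boot.
From mathcomp Require Import perm zify.

Set Implicit Arguments.
Unset Strict Implicit.
Unset Printing Implicit Defensive.

(* Blow G up: take two copies of every vertex of a largest K_(k-1)-free set A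
   and three copies of every other vertex, two copies being adjacent exactly
   when their originals are.  The result is still K_k-free.  Given a
   partition (X, Y) of the blow-up, colour a vertex of G red when at least two
   of its copies lie in X.  A red K_(k-1) of G lifts to a J_k inside X (the
   two copies over one clique vertex form the missing edge).  Otherwise G has
   a K_(k-1) none of whose vertices is red; if some vertex of it has two
   copies in Y this lifts to a J_k inside Y, and if not, every vertex of it
   has at most two copies, hence lies in A, contradicting the choice of A. *)

Lemma contains_inP (W V : finType) (h : rel W) (e : rel V) (X : {set V}) :
  reflect (exists g : W -> V, [/\ injective g, forall w, g w \in X
                                & forall a c, h a c -> e (g a) (g c)])
          (contains_in h e X).
Proof.
apply: (iffP existsP) => [[f /and3P [/injectiveP finj /forallP fX /forallP fE]]
                         | [g [ginj gX gE]]].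
  by exists f; split=> // a c; apply: implyP (forallP (fE a) c).
exists [ffun w => g w]; apply/and3P; split.
- by apply/injectiveP => w1 w2; rewrite !ffunE => /ginj.
- by apply/forallP => w; rewrite ffunE.
- by apply/forallP => a; apply/forallP => c; apply/implyP; rewrite !ffunE; exact: gE.
Qed.

Section Blowup.

Variables (V U : finType) (e : rel V) (b : U -> V).

Definition blowup : rel U := fun x y => e (b x) (b y).

Definition fiber (v : V) : {set U} := [set x | b x == v].

Lemma simple_graph_blowup : simple_graph e -> simple_graph blowup.
Proof. by case=> irr sym; split=> [x | x y]; [exact: irr | exact: sym]. Qed.

Lemma Kfree_blowup k : irreflexive e -> Kfree e k -> Kfree blowup k.
Proof.
move=> irr; apply: contra => /contains_inP [g [ginj _ gE]].
apply/contains_inP; exists (b \o g); split=> [i j /= bij | w | //].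
  by case: (eqVneq i j) => // /gE; rewrite /blowup bij irr.
by rewrite in_setT.
Qed.

(* The clique vertex [i0] is placed at positions 0 and 1 of J_(m+3), the other
   clique vertices fill the remaining positions via [tperm ord0 i0]. *)
Lemma contains_Jg_blowup m (g : 'I_m.+2 -> V) (i0 : 'I_m.+2) (Z : {set U}) :
  injective g -> (forall i j, i != j -> e (g i) (g j)) ->
  1 < #|Z :&: fiber (g i0)| -> (forall i, 0 < #|Z :&: fiber (g i)|) ->
  contains_in (Jg m.+3) blowup Z.
Proof.
move=> ginj gE /card_gt1P [u1 [u2 [u1Z u2Z u12]]] Zg.
have /fin_all_exists [p pZ] : forall i, exists x, x \in Z :&: fiber (g i).
  by move=> i; apply/set0Pn; rewrite -card_gt0.
have [u uZ uNp] : exists2 u, u \in Z :&: fiber (g i0) & u != p i0.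
  by case: (eqVneq u1 (p i0)) => [<- | ]; [exists u2; rewrite // eq_sym | exists u1].
pose t (j : 'I_m.+3) : 'I_m.+2 := tperm ord0 i0 (inord j.-1).
pose F (j : 'I_m.+3) := if val j == 1 then u else p (t j).
have t1 : t (inord 1) = i0.
  by rewrite /t inordK //= (_ : inord 0 = ord0) ?tpermL //; apply: ord_inj; rewrite inordK.
have FZ j : F j \in Z :&: fiber (g (t j)).
  rewrite /F; case: eqP => [j1 | _] //.
  by rewrite (_ : j = inord 1) ?t1 //; apply: ord_inj; rewrite inordK //; exact: j1.
have t_eq j j' : (t j == t j') = (j.-1 == j'.-1).
  rewrite (inj_eq perm_inj) -(inj_eq val_inj) /= !inordK //.
  - by have := ltn_ord j'; lia.
  - by have := ltn_ord j; lia.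
have bp i : b (p i) = g i by have := pZ i; rewrite !inE => /andP [_ /eqP].
have pt_neq_u j : val j != 1 -> p (t j) != u.
  move=> j1; apply: contraNneq uNp => ptu.
  have /ginj tj : g (t j) = g i0 by rewrite -bp ptu; have := uZ; rewrite !inE => /andP [_ /eqP].
  by rewrite -ptu tj.
apply/contains_inP; exists F; split.
- move=> j j'; rewrite /F; case: eqP => [j1 | /eqP j1]; case: eqP => [j'1 | /eqP j'1].
  + by move=> _; apply: val_inj; rewrite /= j1 j'1.
  + by move=> ptu; move: (pt_neq_u j' j'1); rewrite -ptu eqxx.
  + by move=> ptu; move: (pt_neq_u j j1); rewrite ptu eqxx.
  + move=> /(congr1 b); rewrite !bp => /ginj /eqP; rewrite t_eq => /eqP jj'.
    by apply: val_inj; move: j1 j'1 jj'; rewrite /=; lia.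
- by move=> j; have := FZ j; rewrite inE => /andP [].
- have bF j : b (F j) = g (t j) by have := FZ j; rewrite !inE => /andP [_ /eqP].
  move=> j j' /andP [nj nJ]; rewrite /blowup !bF; apply: gE.
  by rewrite t_eq; move: nj nJ; rewrite -val_eqE /=; lia.
Qed.

Lemma varrows_blowup m (A : {set V}) :
  varrows e (Kg m.+2) (Kg m.+2) -> ~~ contains_in (Kg m.+2) e A ->
  (forall v, 1 < #|fiber v|) -> (forall v, v \notin A -> 2 < #|fiber v|) ->
  varrows blowup (Jg m.+3) (Jg m.+3).
Proof.
move=> arr AKf fiber2 fiber3 X.
have card_fiber_split v : #|fiber v| = #|X :&: fiber v| + #|~: X :&: fiber v|.
  by rewrite -(cardsID X (fiber v)) setDE (setIC _ X) (setIC _ (~: X)).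
case: (arr [set v | 1 < #|X :&: fiber v|]) => /contains_inP [g [ginj gY gE]].
  left; apply: (@contains_Jg_blowup m g ord0 X ginj gE).
    by have := gY ord0; rewrite inE.
  by move=> i; have := gY i; rewrite inE => /ltnW.
have X_le1 i : #|X :&: fiber (g i)| <= 1 by have := gY i; rewrite !inE -leqNgt.
case: (boolP [exists i, 1 < #|~: X :&: fiber (g i)|]) => [/existsP [i0 i0Y] | XC_le1].
  right; apply: (@contains_Jg_blowup m g i0 (~: X) ginj gE i0Y) => i.
  by have := fiber2 (g i); have := X_le1 i; rewrite card_fiber_split; lia.
exfalso; move/negP: AKf; apply; apply/contains_inP; exists g; split=> // i.
apply: contraT => /fiber3; rewrite card_fiber_split.
have := X_le1 i; have : #|~: X :&: fiber (g i)| <= 1.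
  by rewrite leqNgt; apply: contra XC_le1 => ?; apply/existsP; exists i.
lia.
Qed.

End Blowup.

Lemma card_fiber_enum_val (V U : finType) (b : U -> V) (v : V) :
  #|fiber (fun i : 'I_#|U| => b (enum_val i)) v| = #|fiber b v|.
Proof.
rewrite -(card_imset _ enum_val_inj); apply: eq_card => x.
apply/imsetP/idP => [[i] | ]; first by rewrite !inE => /eqP <- ->.
by rewrite inE => bx; exists (enum_rank x); rewrite ?inE /= enum_rankK.
Qed.

Section Cover.

Variables (V : finType) (A : {set V}).

Definition cover : finType := ((V * bool) + {v : V | v \notin A})%type.

Definition cover_base (w : cover) : V :=
  match w with inl p => p.1 | inr s => val s end.

Lemma card_cover : #|{: cover}| = 3 * #|V| - #|A|.
Proof.
rewrite card_sum card_prod card_bool card_sig.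
have -> : #|[pred v | v \notin A]| = #|~: A| by apply: eq_card => v; rewrite !inE.
have := cardsC A; lia.
Qed.

Lemma card_fiber_cover_gt1 v : 1 < #|fiber cover_base v|.
Proof.
apply: leq_trans (subset_leq_card (_ : [set inl (v, false); inl (v, true)] \subset _)).
  by rewrite cards2 ltnS lt0b; apply/eqP => -[].
by apply/subsetP => w; rewrite !inE => /orP [] /eqP ->.
Qed.

Lemma card_fiber_cover_gt2 v : v \notin A -> 2 < #|fiber cover_base v|.
Proof.
move=> vA; pose s : cover := inr (exist _ v vA).
apply: leq_trans (subset_leq_card (_ : s |: [set inl (v, false); inl (v, true)] \subset _)).
  by rewrite cardsU1 cards2 !inE /= !ltnS lt0b; apply/eqP => -[].
by apply/subsetP => w; rewrite !inE => /or3P [] /eqP ->.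
Qed.

End Cover.

Lemma exists_Kfree_set_of_size_fmax (V : finType) (e : rel V) n :
  exists2 A : {set V}, ~~ contains_in (Kg n.+1) e A & #|A| = fmax e n.+1.
Proof.
rewrite /fmax; have [|A AKf ->] :=
  @eq_bigmax_cond _ [pred S : {set V} | ~~ contains_in (Kg n.+1) e S] (fun S => #|S|).
  apply/card_gt0P; exists set0; rewrite inE.
  by apply/contains_inP => -[g [_ /(_ ord0)]]; rewrite inE.
by exists A.
Qed.

Theorem mainTheorem6 (k : nat) (hk : 3 <= k) (V : finType) (e : rel V)
  (hG : inFv e (Kg (k - 1)) (Kg (k - 1)) k)
  (hmin : forall (n : nat) (h : rel 'I_n),
            inFv h (Kg (k - 1)) (Kg (k - 1)) k -> #|V| <= n) :
  exists (n : nat) (h : rel 'I_n),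
    inFv h (Jg k) (Jg k) k /\ n <= 3 * #|V| - fmax e (k - 1).
Proof.
have [m km] : exists m, k = m.+3 by exists (k - 3); lia.
subst k; change (m.+3 - 1) with m.+2 in hG |- *.
case: hG => [simple [Kf arr]]; have [irr _] := simple.
have [A AKf <-] := exists_Kfree_set_of_size_fmax e m.+1.
pose b (i : 'I_#|cover A|) := cover_base (enum_val i).
exists #|cover A|, (blowup e b); split; last by rewrite card_cover.
split; first exact: simple_graph_blowup.
split; first exact: Kfree_blowup.
apply: (varrows_blowup arr AKf) => [v | v vA]; rewrite card_fiber_enum_val.
- exact: card_fiber_cover_gt1.
- exact: card_fiber_cover_gt2.
Qed.
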